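(* The map $\Phi$ from labelled red and white trees to formal fractions is injective: for every $n$, $\Phi:\mathrm{RW}(n)\to\mathcal{FF}(n)$ is injective.
   Context: $\mathrm{RW}(n)$: finite rooted trees (children unordered) whose nodes $z$ carry possibly empty label sets $L(z)\subseteq[n]$ partitioning $[n]$, every empty node having at least two children; a labelled node is white, an empty node is red iff all its children are white, white otherwise. $\mathcal{FF}(n)$: reduced formal fractions whose numerator and denominator are products of symbols $[S]$, $\emptyset\ne S\subseteq[n]$ (free abelian group on these symbols). For a node $z$ of $T$, let $S(z)$ be the union of the label sets of all nodes in the subtree rooted at $z$, and let $E(z)=1/[S(z)]$ if $z$ is white, $E(z)=[S(z)]$ if $z$ is red and not the root, $E(z)=1$ if $z$ is red and the root. Then $\Phi(T)=\prod_{z}E(z)$ over all nodes $z$ of $T$. *)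

From HB Require Import structures.
From mathcomp Require Import all_boot all_order all_algebra.
From Stdlib Require List.
From Stdlib Require Import Sorting.Permutation.
Set Implicit Arguments. Unset Strict Implicit. Unset Printing Implicit Defensive.
Import GRing.Theory.
Local Open Scope ring_scope.

(* Finite rooted trees with unordered children (represented by a list of
   children; unorderedness is handled by the isomorphism relation [tiso]). *)
Inductive rtree (n : nat) : Type :=
  RNode : {set 'I_n} -> seq (rtree n) -> rtree n.

Section Trees.
Variable n : nat.

Definition node_label (t : rtree n) : {set 'I_n} :=
  let: RNode L _ := t in L.

Fixpoint labels (t : rtree n) : seq {set 'I_n} :=
  let: RNode L cs := t in L :: flatten (map labels cs).

Fixpoint empty_nodes_ok (t : rtree n) : bool :=
  let: RNode L cs := t in
  ((L != set0) || (2 <= size cs)%N) && all empty_nodes_ok cs.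

Definition labels_partition (t : rtree n) : Prop :=
  forall i : 'I_n, count (fun L : {set 'I_n} => i \in L) (labels t) = 1%N.

Definition RW (t : rtree n) : Prop :=
  empty_nodes_ok t /\ labels_partition t.

(* colour: labelled nodes are white; an empty node is red iff all its
   children are white, white otherwise *)
Fixpoint is_white (t : rtree n) : bool :=
  let: RNode L cs := t in (L != set0) || ~~ all is_white cs.

Fixpoint subtree_set (t : rtree n) : {set 'I_n} :=
  let: RNode L cs := t in L :|: \bigcup_(S <- map subtree_set cs) S.

(* Formal fractions: elements of the free abelian group on the symbols [S],
   represented by their exponent vectors (S ↦ exponent of [S]); a reduced
   fraction num/den corresponds exactly to such an exponent vector. *)
Definition FF := {ffun {set 'I_n} -> int}.

Definition sym (S : {set 'I_n}) : FF := [ffun A => ((A == S) : nat)%:Z].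

Definition ff_mul (f g : FF) : FF := [ffun A => f A + g A].
Definition ff_one : FF := [ffun _ => 0].
Definition ff_inv (f : FF) : FF := [ffun A => - f A].

Fixpoint phi_aux (root : bool) (t : rtree n) : FF :=
  let: RNode L cs := t in
  let E := if is_white t then ff_inv (sym (subtree_set t))
           else if root then ff_one else sym (subtree_set t) in
  foldr (fun c acc => ff_mul (phi_aux false c) acc) E cs.

Definition Phi (t : rtree n) : FF := phi_aux true t.

End Trees.

Inductive tiso (n : nat) : rtree n -> rtree n -> Prop :=
  | TIso (L : {set 'I_n}) (cs cs1 cs2 : seq (rtree n)) :
      Permutation cs cs1 -> List.Forall2 (@tiso n) cs1 cs2 ->
      tiso (RNode L cs) (RNode L cs2).

From HB Require Import structures.
From mathcomp Require Import all_boot all_order all_algebra.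
From Stdlib Require List.
From mathcomp Require Import zify.
From Stdlib Require Import Sorting.Permutation.
Set Implicit Arguments. Unset Strict Implicit. Unset Printing Implicit Defensive.
Import GRing.Theory.

(* Call a tree "good" if every empty node has at least two children and every
   i in [n] occurs in at most one label set.  For a good tree the subtree sets
   S(z) are nonempty, a proper descendant never has the same set as its
   ancestor, and sibling subtrees have disjoint sets.  Hence the symbols [S(z)]
   are pairwise distinct, and Phi(T) carries every symbol [S(z)] with exponent
   +1 or -1, except that of the root when the root is red (exponent 0), and no
   other symbol.  As S(root) = [n] for T in RW(n), the family
   {S(z) : z node of T} is { [n] } together with the support of Phi(T)
   (lemma [subtree_sets_Phi]).

   Conversely a good tree is determined up to isomorphism by this family
   (lemma [tiso_of_same_sets]): the children's sets are the maximal members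
   below the root set, each child's family is the part of the family contained
   in its set, and the label of the root is S(root) minus the union of the
   children's sets. *)

Lemma mem_map_In (T : Type) (K : eqType) (f : T -> K) (s : seq T) (k : K) :
  k \in map f s -> exists2 x, List.In x s & f x = k.
Proof.
elim: s => [|x s IH] //=; rewrite inE => /orP[/eqP->|/IH[y hy <-]].
  by exists x => //; left.
by exists y => //; right.
Qed.

Lemma In_mem_map (T : Type) (K : eqType) (f : T -> K) (s : seq T) (x : T) :
  List.In x s -> f x \in map f s.
Proof. by elim: s => [|y s IH] //= [<-|/IH h]; rewrite inE ?eqxx ?h ?orbT. Qed.

Lemma all_In (T : Type) (p : pred T) (s : seq T) (x : T) :
  all p s -> List.In x s -> p x.
Proof. by elim: s => [|y s IH] //= /andP[py ps] [<-|/IH]; last exact. Qed.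

Lemma permute_by_keys (T : Type) (K : eqType) (k : T -> K) (R : T -> T -> Prop)
    (s2 s1 : seq T) :
  uniq (map k s1) -> perm_eq (map k s1) (map k s2) ->
  (forall x y, List.In x s1 -> List.In y s2 -> k x = k y -> R x y) ->
  exists s, Permutation s1 s /\ List.Forall2 R s s2.
Proof.
elim: s2 s1 => [|y s2 IH] s1 hu hp hR.
  by case: s1 hp {hu hR} => [|x s1] hp; [exists [::] | move: (perm_size hp)].
have /mem_map_In[x hx ekx] : k y \in map k s1 by rewrite (perm_mem hp) inE eqxx.
have [pre [post es1]] := List.in_split x s1 hx; subst s1.
have Pcons : perm_eq (map k (pre ++ x :: post)) (k x :: map k (pre ++ post)).
  by rewrite !map_cat /= -cat1s perm_catCA.
have hu' : uniq (map k (pre ++ post)) by move: hu; rewrite (perm_uniq Pcons) /= => /andP[].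
have hp' : perm_eq (map k (pre ++ post)) (map k s2).
  rewrite -(perm_cons (k x)) -(permPl Pcons) ekx; exact: hp.
have [s [Ps Fs]] : exists s, Permutation (pre ++ post) s /\ List.Forall2 R s s2.
  apply: IH => // a b ha hb; apply: hR; last by right.
  by case: (List.in_app_or _ _ _ ha) => h; apply: List.in_or_app; [left | right; right].
exists (x :: s); split.
  exact: Permutation_trans (Permutation_sym (Permutation_middle _ _ _)) (perm_skip _ Ps).
constructor => //; apply: hR ekx; last by left.
by apply: List.in_or_app; right; left.
Qed.

Section Reconstruction.
Variable n : nat.
Implicit Types (t c : rtree n) (cs : seq (rtree n)) (A B C : {set 'I_n}).

Lemma rtree_ind' (P : rtree n -> Prop) :
  (forall L cs, (forall c, List.In c cs -> P c) -> P (RNode L cs)) ->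
  forall t, P t.
Proof.
move=> H; fix F 1 => -[L cs]; apply: H.
elim: cs => [|c0 cs' G] c /=; first by case.
by case=> [<-|h]; [exact: F | exact: G].
Qed.

Definition forest_set cs : {set 'I_n} := \bigcup_(S <- map (@subtree_set n) cs) S.

Lemma subtree_set_node L cs : subtree_set (RNode L cs) = L :|: forest_set cs.
Proof. by []. Qed.

Lemma forest_set_nil : forest_set [::] = set0.
Proof. by rewrite /forest_set big_nil. Qed.

Lemma forest_set_cons c cs : forest_set (c :: cs) = subtree_set c :|: forest_set cs.
Proof. by rewrite /forest_set /= big_cons. Qed.

Lemma subtree_set_sub_forest c cs :
  List.In c cs -> subtree_set c \subset forest_set cs.
Proof.
elim: cs => [|d cs IH] //= [<-|/IH h]; rewrite forest_set_cons; first exact: subsetUl.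
exact: subset_trans h (subsetUr _ _).
Qed.

Definition lcount (i : 'I_n) t := count (fun L : {set 'I_n} => i \in L) (labels t).
Definition forest_lcount i cs := sumn (map (lcount i) cs).

Lemma lcount_node i L cs : lcount i (RNode L cs) = (i \in L) + forest_lcount i cs.
Proof. by rewrite /lcount /= count_flatten -map_comp. Qed.

Lemma forest_set_lcount i cs :
  (forall c, List.In c cs -> (i \in subtree_set c) = (0 < lcount i c)%N) ->
  (i \in forest_set cs) = (0 < forest_lcount i cs)%N.
Proof.
elim: cs => [|c cs IH] H; first by rewrite forest_set_nil inE.
rewrite forest_set_cons in_setU /forest_lcount /= addn_gt0 H; last by left.
by rewrite -IH // => d hd; apply: H; right.
Qed.

Lemma subtree_set_lcount i t : (i \in subtree_set t) = (0 < lcount i t)%N.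
Proof.
elim/rtree_ind': t => L cs IH.
by rewrite subtree_set_node lcount_node in_setU addn_gt0 lt0b forest_set_lcount.
Qed.

Lemma forest_set_lcountE i cs : (i \in forest_set cs) = (0 < forest_lcount i cs)%N.
Proof. by apply: forest_set_lcount => c _; apply: subtree_set_lcount. Qed.

Definition good t := empty_nodes_ok t /\ forall i, (lcount i t <= 1)%N.
Definition good_forest cs :=
  (forall c, List.In c cs -> empty_nodes_ok c) /\ forall i, (forest_lcount i cs <= 1)%N.

Lemma RW_good t : RW t -> good t.
Proof. by case=> h1 h2; split => // i; rewrite /lcount h2. Qed.

Lemma RW_subtree_set t : RW t -> subtree_set t = setT.
Proof. by case=> _ h; apply/setP => i; rewrite inE subtree_set_lcount /lcount h. Qed.

Lemma good_children L cs : good (RNode L cs) -> good_forest cs.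
Proof.
case=> /= /andP[_ ha] hc; split; first by move=> c; apply: all_In.
by move=> i; apply: leq_trans (hc i); rewrite lcount_node leq_addl.
Qed.

Lemma good_node L cs : good (RNode L cs) ->
  [disjoint L & forest_set cs] /\ (L == set0 -> 2 <= size cs)%N.
Proof.
case=> /= /andP[hL _] hc; split; last by case: (L == set0) hL.
apply/pred0P => i /=; apply/negP => /andP[iL].
have := hc i; rewrite lcount_node iL forest_set_lcountE; lia.
Qed.

Lemma good_forest_cons c cs : good_forest (c :: cs) ->
  [/\ good c, good_forest cs & [disjoint subtree_set c & forest_set cs]].
Proof.
case=> h1 h2; have hc := h2; rewrite /forest_lcount /= in hc; split.
- split=> [|i]; first by apply: h1; left.
  by apply: leq_trans (hc i); rewrite leq_addr.
- split=> [d hd|i]; first by apply: h1; right.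
  by apply: leq_trans (hc i); rewrite leq_addl.
- apply/pred0P => i /=; rewrite subtree_set_lcount forest_set_lcountE.
  by have := hc i; rewrite /forest_lcount; apply/contraTF; lia.
Qed.

Lemma good_forest_In c cs : good_forest cs -> List.In c cs -> good c.
Proof.
elim: cs => [|d cs IH] //= /good_forest_cons[gd gf _] [<-|h] //; exact: IH.
Qed.

Lemma good_child L cs c : good (RNode L cs) -> List.In c cs -> good c.
Proof. by move/good_children; apply: good_forest_In. Qed.

(* In a good tree, S(t) is nonempty: an empty root has a (good) child. *)
Lemma subtree_set_neq0 t : good t -> subtree_set t != set0.
Proof.
elim/rtree_ind': t => L cs IH g; have [_ hs] := good_node g.
rewrite subtree_set_node; case: (boolP (L == set0)) => hL; last first.
  by case/set0Pn: hL => i hi; apply/set0Pn; exists i; rewrite inE hi.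
case: cs IH g hs => [|c cs] IH g /(_ hL) // _.
have /set0Pn[i hi] := IH c (or_introl erefl) (good_child g (or_introl erefl)).
by apply/set0Pn; exists i; rewrite forest_set_cons !inE hi orbT.
Qed.

Lemma not_disjoint_sub A B C :
  A != set0 -> A \subset B -> A \subset C -> ~~ [disjoint B & C].
Proof.
case/set0Pn=> i hi /subsetP hB /subsetP hC; apply/pred0Pn; exists i.
by rewrite /= hB ?hC.
Qed.

Lemma good_forest_sibling cs c c' : good_forest cs -> List.In c cs -> List.In c' cs ->
  ~~ [disjoint subtree_set c & subtree_set c'] -> c = c'.
Proof.
elim: cs => [|d cs IH] //= /good_forest_cons[_ gf dj] h h' hnd.
case: h => [e|h]; case: h' => [e'|h']; rewrite -?e -?e' in hnd *.
- by [].
- by move: hnd; rewrite (disjointWr (subtree_set_sub_forest h') dj).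
- by move: hnd; rewrite disjoint_sym (disjointWr (subtree_set_sub_forest h) dj).
- exact: IH.
Qed.

Fixpoint subtree_sets t : seq {set 'I_n} :=
  let: RNode L cs := t in subtree_set (RNode L cs) :: flatten (map subtree_sets cs).
Definition forest_sets cs := flatten (map subtree_sets cs).

Lemma subtree_sets_node L cs :
  subtree_sets (RNode L cs) = subtree_set (RNode L cs) :: forest_sets cs.
Proof. by []. Qed.

Lemma subtree_set_in_sets t : subtree_set t \in subtree_sets t.
Proof. by case: t => L cs; rewrite subtree_sets_node inE eqxx. Qed.

Lemma forest_setsP A cs :
  A \in forest_sets cs -> exists2 c, List.In c cs & A \in subtree_sets c.
Proof.
elim: cs => [|d cs IH] //; rewrite /forest_sets /= mem_cat => /orP[h|/IH[c h1 h2]].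
  by exists d => //; left.
by exists c => //; right.
Qed.

Lemma in_forest_sets A c cs :
  List.In c cs -> A \in subtree_sets c -> A \in forest_sets cs.
Proof.
elim: cs => [|d cs IH] //= [<-|h] hA; rewrite /forest_sets /= mem_cat ?hA //.
by rewrite IH ?orbT.
Qed.

Lemma subtree_sets_sub t A : A \in subtree_sets t -> A \subset subtree_set t.
Proof.
elim/rtree_ind': t => L cs IH; rewrite subtree_sets_node inE => /orP[/eqP->//|].
case/forest_setsP => c hc hA; apply: subset_trans (IH c hc hA) _.
exact: subset_trans (subtree_set_sub_forest hc) (subsetUr _ _).
Qed.

Lemma forest_sets_sub cs A : A \in forest_sets cs -> A \subset forest_set cs.
Proof.
case/forest_setsP => c hc hA.
exact: subset_trans (subtree_sets_sub hA) (subtree_set_sub_forest hc).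
Qed.

Lemma subtree_sets_neq0 t A : good t -> A \in subtree_sets t -> A != set0.
Proof.
elim/rtree_ind': t => L cs IH g; rewrite subtree_sets_node inE => /orP[/eqP->|].
  exact: subtree_set_neq0.
by case/forest_setsP => c hc; apply: IH (good_child g hc).
Qed.

(* A set of a good forest with at least two trees misses a point of the
   forest's union: it lies inside one tree, and another tree is nonempty. *)
Lemma forest_sets_proper cs A : good_forest cs -> (2 <= size cs)%N ->
  A \in forest_sets cs -> exists2 i, i \in forest_set cs & i \notin A.
Proof.
case: cs => [|c [|c' cs]] // gf _; have [gc gf' dj] := good_forest_cons gf.
have [gc' _ _] := good_forest_cons gf'.
rewrite {1}/forest_sets /= mem_cat => /orP[hA|hA].
- have /set0Pn[i hi] := subtree_set_neq0 gc'.
  have hiF : i \in forest_set (c' :: cs) by rewrite forest_set_cons inE hi.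
  exists i; first by rewrite forest_set_cons inE hiF orbT.
  apply/negP => /(subsetP (subtree_sets_sub hA)) hic.
  by move: dj => /pred0P/(_ i); rewrite /= hic hiF.
- have /set0Pn[i hi] := subtree_set_neq0 gc.
  exists i; first by rewrite forest_set_cons inE hi.
  apply/negP => /(subsetP (@forest_sets_sub (c' :: cs) A hA)) hiF.
  by move: dj => /pred0P/(_ i); rewrite /= hi hiF.
Qed.

Lemma subtree_set_strict L cs A : good (RNode L cs) -> A \in forest_sets cs ->
  A != subtree_set (RNode L cs).
Proof.
move=> g hA; have [hd hs] := good_node g.
have [i hiS hiA] : exists2 i, i \in subtree_set (RNode L cs) & i \notin A.
  case: (boolP (L == set0)) => hL.
    have [i hi hiA] := forest_sets_proper (good_children g) (hs hL) hA.
    by exists i; rewrite // subtree_set_node inE hi orbT.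
  case/set0Pn: hL => i hi; exists i; first by rewrite subtree_set_node inE hi.
  apply/negP => /(subsetP (forest_sets_sub hA)) hiF.
  by move: hd => /pred0P/(_ i); rewrite /= hi hiF.
by apply/eqP => eA; rewrite eA hiS in hiA.
Qed.

Local Open Scope ring_scope.

Lemma phi_auxE b L cs (A : {set 'I_n}) : phi_aux b (RNode L cs) A =
  (if is_white (RNode L cs) then ff_inv (sym (subtree_set (RNode L cs)))
   else if b then @ff_one n else sym (subtree_set (RNode L cs))) A
  + \sum_(c <- cs) phi_aux false c A.
Proof.
have foldrE (E : FF n) ds : (foldr (fun c acc => ff_mul (phi_aux false c) acc) E ds) A
    = E A + \sum_(c <- ds) phi_aux false c A.
  elim: ds => [|c ds IH] /=; first by rewrite big_nil addr0.
  by rewrite ffunE IH big_cons addrCA.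
exact: foldrE.
Qed.

(* Since the families of the trees of a good forest are disjoint, the
   supports of their non-root exponent vectors simply add up. *)
Lemma phi_forest_support cs : good_forest cs ->
  (forall c, List.In c cs -> forall A, (phi_aux false c A != 0) = (A \in subtree_sets c)) ->
  forall A, (\sum_(c <- cs) phi_aux false c A != 0) = (A \in forest_sets cs).
Proof.
elim: cs => [|c cs IH] gf H A; first by rewrite big_nil.
have [gc gf' dj] := good_forest_cons gf.
have IH' := IH gf' (fun d hd => H d (or_intror hd)) A.
rewrite big_cons /forest_sets /= mem_cat -/(forest_sets cs).
case: (boolP (A \in subtree_sets c)) => hA /=.
- have hn : A \notin forest_sets cs.
    apply/negP => hA'; move: dj; apply/negP.
    exact: not_disjoint_sub (subtree_sets_neq0 gc hA) (subtree_sets_sub hA) (forest_sets_sub hA').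
  rewrite (negbTE hn) in IH'; move/negbFE/eqP: IH' => ->.
  by rewrite addr0 H //; left.
- by move: (H c (or_introl erefl) A); rewrite (negbTE hA) => /negbFE/eqP ->; rewrite add0r.
Qed.

Lemma phi_support t : good t -> forall b A,
  (phi_aux b t A != 0) =
  (A \in subtree_sets t) && ~~ [&& b, ~~ is_white t & A == subtree_set t].
Proof.
elim/rtree_ind': t => L cs IH g b A.
have FC := phi_forest_support (good_children g)
  (fun c hc B => etrans (IH c hc (good_child g hc) false B) (andbT _)) A.
rewrite phi_auxE subtree_sets_node inE.
set St := subtree_set (RNode L cs).
case: (eqVneq A St) => [eA|nA].
- have hn : A \notin forest_sets cs.
    by apply/negP => /(subtree_set_strict g); rewrite eA eqxx.
  rewrite (negbTE hn) in FC; move/negbFE/eqP: FC => ->; rewrite addr0 eA.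
  by case: (is_white _); case: b; rewrite ?ffunE eqxx.
- have -> : (if is_white (RNode L cs) then ff_inv (sym St)
     else if b then @ff_one n else sym St) A = 0.
    by case: (is_white _); case: b; rewrite /ff_inv /sym /ff_one ?ffunE ?ffunE //= (negbTE nA) //= ?oppr0.
  by rewrite add0r FC /= !andbF andbT.
Qed.

Lemma subtree_sets_Phi t : RW t ->
  forall A, (A \in subtree_sets t) = (A == setT) || (Phi t A != 0).
Proof.
move=> r A; rewrite /Phi (phi_support (RW_good r)) (RW_subtree_set r).
case: (eqVneq A setT) => [->|nA] /=; last by rewrite andbF andbT.
by rewrite -(RW_subtree_set r) subtree_set_in_sets.
Qed.

Local Close Scope ring_scope.

Definition same_sets t1 t2 := forall A, (A \in subtree_sets t1) = (A \in subtree_sets t2).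

Lemma same_sets_sym t1 t2 : same_sets t1 t2 -> same_sets t2 t1.
Proof. by move=> E A; rewrite E. Qed.

Lemma same_sets_root t1 t2 : same_sets t1 t2 -> subtree_set t1 = subtree_set t2.
Proof.
move=> E; apply/eqP; rewrite eqEsubset; apply/andP; split; apply: subtree_sets_sub.
  by rewrite -E subtree_set_in_sets.
by rewrite E subtree_set_in_sets.
Qed.

Section SameSets.
Variables (L1 L2 : {set 'I_n}) (cs1 cs2 : seq (rtree n)).
Hypotheses (g1 : good (RNode L1 cs1)) (g2 : good (RNode L2 cs2)).
Hypothesis E : same_sets (RNode L1 cs1) (RNode L2 cs2).

Lemma same_sets_below A : A \in forest_sets cs1 -> A \in forest_sets cs2.
Proof.
move=> hA; have : A \in subtree_sets (RNode L2 cs2).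
  by rewrite -E subtree_sets_node inE hA orbT.
rewrite subtree_sets_node inE => /orP[/eqP eA|//].
by move: (subtree_set_strict g1 hA); rewrite (same_sets_root E) eA eqxx.
Qed.

(* Children with the same set also have the same family: a set of c1 is a
   proper set of the second tree lying in a child meeting S(c1) = S(c2). *)
Lemma same_sets_child_sub c1 c2 A : List.In c1 cs1 -> List.In c2 cs2 ->
  subtree_set c1 = subtree_set c2 -> A \in subtree_sets c1 -> A \in subtree_sets c2.
Proof.
move=> h1 h2 eS hA.
case/forest_setsP: (same_sets_below (in_forest_sets h1 hA)) => c2' h2' hA'.
suff -> : c2 = c2' by [].
apply: (good_forest_sibling (good_children g2) h2 h2').
apply: not_disjoint_sub (subtree_sets_neq0 (good_child g1 h1) hA) _ (subtree_sets_sub hA').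
by rewrite -eS; exact: subtree_sets_sub.
Qed.

End SameSets.

(* Every child of the first tree has a child of the second tree with the same
   set and the same family: S(c1) is a proper set of the second tree, lying in
   some child c2, and symmetrically S(c2) lies in a child of the first tree,
   which must be c1 since it meets S(c1). *)
Lemma matching_child L1 cs1 L2 cs2 c1 :
  good (RNode L1 cs1) -> good (RNode L2 cs2) -> same_sets (RNode L1 cs1) (RNode L2 cs2) ->
  List.In c1 cs1 ->
  exists c2, [/\ List.In c2 cs2, subtree_set c1 = subtree_set c2 & same_sets c1 c2].
Proof.
move=> g1 g2 E h1; have E' := same_sets_sym E.
have /forest_setsP[c2 h2 hc2] :=
  same_sets_below g1 E (in_forest_sets h1 (subtree_set_in_sets c1)).
have /forest_setsP[c1' h1' hc1'] :=
  same_sets_below g2 E' (in_forest_sets h2 (subtree_set_in_sets c2)).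
have sub12 := subtree_sets_sub hc2; have sub21 := subtree_sets_sub hc1'.
have ec : c1 = c1'.
  apply: (good_forest_sibling (good_children g1) h1 h1').
  exact: not_disjoint_sub (subtree_set_neq0 (good_child g1 h1)) (subxx _)
    (subset_trans sub12 sub21).
rewrite -ec in sub21.
have eS : subtree_set c1 = subtree_set c2 by apply/eqP; rewrite eqEsubset sub12 sub21.
exists c2; split => // A; apply/idP/idP => hA.
  exact (same_sets_child_sub g1 g2 E h1 h2 eS hA).
exact (same_sets_child_sub g2 g1 E' h2 h1 (esym eS) hA).
Qed.

Lemma node_labelE L cs : good (RNode L cs) ->
  L = subtree_set (RNode L cs) :\: forest_set cs.
Proof.
by case/good_node => dj _; rewrite subtree_set_node setDUl setDv setU0 (setDidPl dj).
Qed.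

Lemma good_forest_uniq_sets cs : good_forest cs -> uniq (map (@subtree_set n) cs).
Proof.
elim: cs => [|c cs IH] //= /good_forest_cons[gc gf dj]; rewrite IH // andbT.
apply/negP => /mem_map_In[c' h e]; move: dj; apply/negP.
apply: not_disjoint_sub (subtree_set_neq0 gc) (subxx _) _.
by rewrite -e; exact: subtree_set_sub_forest.
Qed.

Lemma matching_children_sets L1 cs1 L2 cs2 :
  good (RNode L1 cs1) -> good (RNode L2 cs2) -> same_sets (RNode L1 cs1) (RNode L2 cs2) ->
  perm_eq (map (@subtree_set n) cs1) (map (@subtree_set n) cs2).
Proof.
move=> g1 g2 E; have E' := same_sets_sym E.
apply: uniq_perm; [exact: good_forest_uniq_sets (good_children g1)
                  | exact: good_forest_uniq_sets (good_children g2) |] => A.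
apply/idP/idP => /mem_map_In[c hc <-].
  by case: (matching_child g1 g2 E hc) => c2 [h2 -> _]; apply: In_mem_map.
by case: (matching_child g2 g1 E' hc) => c2 [h2 -> _]; apply: In_mem_map.
Qed.

Lemma tiso_of_same_sets t1 : good t1 ->
  forall t2, good t2 -> same_sets t1 t2 -> tiso t1 t2.
Proof.
elim/rtree_ind': t1 => L1 cs1 IH g1 [L2 cs2] g2 E.
have PS := matching_children_sets g1 g2 E.
have eL : L2 = L1.
  rewrite (node_labelE g1) (node_labelE g2) (same_sets_root E); congr (_ :\: _).
  by rewrite /forest_set (perm_big _ PS).
have [s [Ps Fs]] : exists s, Permutation cs1 s /\ List.Forall2 (@tiso n) s cs2.
  apply: (permute_by_keys (k := @subtree_set n)) => //.
  exact: good_forest_uniq_sets (good_children g1).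
  move=> x y hx hy e.
  case: (matching_child g1 g2 E hx) => c2 [h2 eS fe].
  have -> : y = c2.
    apply: (good_forest_sibling (good_children g2) hy h2).
    apply: not_disjoint_sub (subtree_set_neq0 (good_child g2 hy)) (subxx _) _.
    by rewrite -eS e.
  exact: IH x hx (good_child g1 hx) c2 (good_child g2 h2) fe.
by rewrite eL; econstructor; eassumption.
Qed.

End Reconstruction.

Theorem mainTheorem9 (n : nat) (T1 T2 : rtree n) :
  RW T1 -> RW T2 -> Phi T1 = Phi T2 -> tiso T1 T2.
Proof.
move=> r1 r2 e; apply: tiso_of_same_sets (RW_good r1) _ (RW_good r2) _ => A.
by rewrite (subtree_sets_Phi r1) (subtree_sets_Phi r2) e.
Qed.
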